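(* The linear operator $\bar P:\text{Ш}_e(A)\bar\otimes\text{Ш}_e(A)\to\text{Ш}_e(A)\bar\otimes\text{Ш}_e(A)$, $$\bar P(\mathfrak{a}\bar\otimes\mathfrak{b})=P_e(\mathfrak{a})\bar\otimes\varepsilon_e(\mathfrak{b})1_A+\mu\,\mathfrak{a}\bar\otimes\varepsilon_e(\mathfrak{b})1_A+\mathfrak{a}\bar\otimes P_e(\mathfrak{b}),$$ is an extended Rota-Baxter operator of weight $(\lambda,\kappa)$ on the commutative algebra $\text{Ш}_e(A)\bar\otimes\text{Ш}_e(A)$.
   Context: $\mathbf{k}$ is a commutative unitary ring, $\lambda,\kappa\in\mathbf{k}$, and $\mu\in\mathbf{k}$ a root of $t^2-\lambda t+\kappa$. An extended Rota-Baxter operator of weight $(\lambda,\kappa)$ on an algebra $R$ is a linear $P$ with $P(x)P(y)=P(xP(y))+P(P(x)y)+\lambda P(xy)+\kappa xy$. $A=(A,m_A,\mu_A,\Delta_A,\varepsilon_A)$ is a commutative bialgebra and $(\text{Ш}_e(A),\diamond,P_e,j_A)$ the free commutative extended Rota-Baxter algebra of weight $(\lambda,\kappa)$ on $A$: $\text{Ш}_e(A)=\bigoplus_{n\ge1}A^{\otimes n}$, $P_e(\mathfrak{a})=1_A\otimes\mathfrak{a}$, with product $\diamond$ defined recursively by $a_0\diamond b_0=a_0b_0$, $a_0\diamond(b_0\otimes\mathfrak{b}')=a_0b_0\otimes\mathfrak{b}'$, $(a_0\otimes\mathfrak{a}')\diamond b_0=a_0b_0\otimes\mathfrak{a}'$,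 and $(a_0\otimes\mathfrak{a}')\diamond(b_0\otimes\mathfrak{b}')=a_0b_0\otimes(\mathfrak{a}'\diamond(1_A\otimes\mathfrak{b}')+(1_A\otimes\mathfrak{a}')\diamond\mathfrak{b}'+\lambda\mathfrak{a}'\diamond\mathfrak{b}')+\kappa a_0b_0(\mathfrak{a}'\diamond\mathfrak{b}')$. $\varepsilon_e:\text{Ш}_e(A)\to\mathbf{k}$ is the unique extended Rota-Baxter algebra homomorphism with $\varepsilon_e\circ j_A=\varepsilon_A$ and $\varepsilon_e\circ P_e=-\mu\,\varepsilon_e$. $\bar\otimes$ denotes the tensor product between copies of $\text{Ш}_e(A)$ (to distinguish it from the tensor inside $\text{Ш}_e(A)$); $\text{Ш}_e(A)\bar\otimes\text{Ш}_e(A)$ has the componentwise product. *)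

From HB Require Import structures.
From mathcomp Require Import all_boot all_order all_algebra.
Set Implicit Arguments. Unset Strict Implicit. Unset Printing Implicit Defensive.
Import GRing.Theory.
Local Open Scope ring_scope.

Definition lin (k : comNzRingType) (M N : lmodType k) (f : M -> N) : Prop :=
  forall (a : k) (x y : M), f (a *: x + y) = a *: f x + f y.

Definition bilin (k : comNzRingType) (M N W : lmodType k) (t : M -> N -> W) : Prop :=
  (forall n, lin (fun m => t m n)) /\ (forall m, lin (t m)).

Definition is_tensor (k : comNzRingType) (M N T : lmodType k) (t : M -> N -> T) : Prop :=
  bilin t /\
  forall (W : lmodType k) (f : M -> N -> W), bilin f ->
    (exists g : T -> W, lin g /\ forall m n, g (t m n) = f m n) /\
    (forall g1 g2 : T -> W, lin g1 -> lin g2 ->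
       (forall m n, g1 (t m n) = g2 (t m n)) -> forall x, g1 x = g2 x).

Definition is_tensor_alg (k : comNzRingType) (A B T : algType k) (t : A -> B -> T) : Prop :=
  is_tensor t /\ t 1 1 = 1 /\
  forall a b c d, t a b * t c d = t (a * c) (b * d).

Definition alg_hom (k : comNzRingType) (A B : algType k) (f : A -> B) : Prop :=
  lin f /\ f 1 = 1 /\ forall x y, f (x * y) = f x * f y.

Definition ext_RB (k : comNzRingType) (R : algType k) (lam kap : k) (P : R -> R) : Prop :=
  lin P /\
  forall x y, P x * P y = P (x * P y) + P (P x * y) + lam *: P (x * y) + kap *: (x * y).

(* Coalgebra axioms are stated via the maps
   eps (x) id, id (x) eps, Delta (x) id, id (x) Delta and the associator,
   which exist uniquely by the universal property of the tensor product. *)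
Definition is_bialgebra (k : comNzRingType) (A AA : algType k) (tA : A -> A -> AA)
    (Delta : A -> AA) (eps : A -> k^o) : Prop :=
  is_tensor_alg tA /\ alg_hom Delta /\ alg_hom eps /\
  (forall c : AA -> A, lin c -> (forall x y, c (tA x y) = eps x *: y) ->
     forall a, c (Delta a) = a) /\
  (forall c : AA -> A, lin c -> (forall x y, c (tA x y) = eps y *: x) ->
     forall a, c (Delta a) = a) /\
  (forall (T3l T3r : lmodType k) (tl : AA -> A -> T3l) (tr : A -> AA -> T3r),
     is_tensor tl -> is_tensor tr ->
     forall (h1 : AA -> T3l) (h2 : AA -> T3r) (al : T3l -> T3r),
       lin h1 -> lin h2 -> lin al ->
       (forall x y, h1 (tA x y) = tl (Delta x) y) ->
       (forall x y, h2 (tA x y) = tr x (Delta y)) ->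
       (forall x y z, al (tl (tA x y) z) = tr x (tA y z)) ->
       forall a, al (h1 (Delta a)) = h2 (Delta a)).

Definition is_free_comm_ERB (k : comNzRingType) (lam kap : k) (A Sh : comAlgType k)
    (j : A -> Sh) (P : Sh -> Sh) : Prop :=
  alg_hom j /\ ext_RB lam kap P /\
  forall (R : comAlgType k) (Q : R -> R) (f : A -> R),
    ext_RB lam kap Q -> alg_hom f ->
    (exists g : Sh -> R, alg_hom g /\ (forall a, g (j a) = f a) /\
                         (forall x, g (P x) = Q (g x))) /\
    (forall g1 g2 : Sh -> R, alg_hom g1 -> alg_hom g2 ->
       (forall a, g1 (j a) = f a) -> (forall x, g1 (P x) = Q (g1 x)) ->
       (forall a, g2 (j a) = f a) -> (forall x, g2 (P x) = Q (g2 x)) ->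
       forall x, g1 x = g2 x).

From HB Require Import structures.
From mathcomp Require Import all_boot all_order all_algebra.
From mathcomp Require Import ring.

Import GRing.Theory.
Local Open Scope ring_scope.

(* Shifting by a multiple of the identity, P |-> P + mu id, turns extended
   Rota-Baxter operators of weight (lam, kap) into extended Rota-Baxter
   operators of weight (lam - 2 mu, kap - lam mu + mu^2).  As mu is a root of
   t^2 - lam t + kap, Q := P_e + mu id is an ordinary Rota-Baxter operator
   (kap = 0) of weight lam - 2 mu with eps_e o Q = 0, and Pbar + mu id is
   Q (x) eps_e + id (x) Q.  For any character chi vanishing on the image of
   a Rota-Baxter operator Q2, the operator Q1 (x) chi + id (x) Q2 is again
   Rota-Baxter of the common weight: on pure tensors both sides expand into
   the Rota-Baxter identities of Q1 and Q2, the remaining cross terms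
   cancelling because chi o Q2 = 0. *)

Section LinearMaps.
Context {k : comNzRingType} {M N : lmodType k}.

Lemma lin_DZ {f : M -> N} :
  (forall x y, f (x + y) = f x + f y) -> (forall a x, f (a *: x) = a *: f x) ->
  lin f.
Proof. by move=> fD fZ a x y; rewrite fD fZ. Qed.

Context {f : M -> N} (f_lin : lin f).

Lemma lin0 : f 0 = 0.
Proof.
have := f_lin 1 0 0; rewrite !scale1r addr0 => f00.
by apply: (@addrI _ (f 0)); rewrite addr0 -f00.
Qed.

Lemma linD x y : f (x + y) = f x + f y.
Proof. by have := f_lin 1 x y; rewrite !scale1r. Qed.

Lemma linZ a x : f (a *: x) = a *: f x.
Proof. by have := f_lin a x 0; rewrite !addr0 lin0 addr0. Qed.

End LinearMaps.

Lemma lin_shift {k : comNzRingType} {M : lmodType k} {mu : k} {P Q : M -> M} :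
  (forall x, Q x = P x + mu *: x) -> lin P -> lin Q.
Proof.
move=> defQ P_lin a x y.
by rewrite !defQ P_lin !scalerDr !scalerA addrACA [mu * a]mulrC.
Qed.

Section TensorProducts.
Context {k : comNzRingType} {M N T : lmodType k} {t : M -> N -> T}.

Lemma tensor_ext {W : lmodType k} {f g : T -> W} :
  is_tensor t -> lin f -> lin g -> (forall m n, f (t m n) = g (t m n)) -> f =1 g.
Proof.
move=> [_ univ] f_lin g_lin fg.
have zero_bilin : bilin (fun (_ : M) (_ : N) => 0 : W).
  by split=> _ a x y; rewrite scaler0 addr0.
exact: (univ W _ zero_bilin).2.
Qed.

Hypothesis t_bilin : bilin t.

Lemma tensorDl m1 m2 n : t (m1 + m2) n = t m1 n + t m2 n.
Proof. exact: (linD (t_bilin.1 n) m1 m2). Qed.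

Lemma tensorZl a m n : t (a *: m) n = a *: t m n.
Proof. exact: (linZ (t_bilin.1 n) a m). Qed.

Lemma tensorDr m n1 n2 : t m (n1 + n2) = t m n1 + t m n2.
Proof. exact: (linD (t_bilin.2 m) n1 n2). Qed.

Lemma tensorZr a m n : t m (a *: n) = a *: t m n.
Proof. exact: (linZ (t_bilin.2 m) a n). Qed.

End TensorProducts.

Lemma scaler_in_alg {k : comNzRingType} {R : algType k} (a : k) (x : R) :
  a *: x = in_alg R a * x.
Proof. by rewrite mulr_algl. Qed.

Section RotaBaxter.
Context {k : comNzRingType} {R : comAlgType k}.

Lemma ext_RB_shift {lam kap mu : k} {P Q : R -> R} :
  (forall x, Q x = P x + mu *: x) -> ext_RB lam kap P ->
  ext_RB (lam - mu *+ 2) (kap - lam * mu + mu ^+ 2) Q.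
Proof.
move=> defQ [P_lin P_RB]; split; first exact: lin_shift defQ P_lin.
move=> x y; rewrite !defQ !(mulrDl, mulrDr, =^~ scalerAl, =^~ scalerAr).
rewrite P_RB !(=^~ scalerAl, =^~ scalerAr, linD P_lin, linZ P_lin) ?scaler_in_alg; ring.
Qed.

Lemma ext_RB_from_pure_tensors {M N : lmodType k} {t : M -> N -> R}
    {lam kap : k} {P : R -> R} :
  is_tensor t -> lin P ->
  (forall m n m' n', P (t m n) * P (t m' n') =
     P (t m n * P (t m' n')) + P (P (t m n) * t m' n')
     + lam *: P (t m n * t m' n') + kap *: (t m n * t m' n')) ->
  ext_RB lam kap P.
Proof.
move=> t_tensor P_lin RB_pure; split=> // x y.
pose rhs u v := P (u * P v) + P (P u * v) + lam *: P (u * v) + kap *: (u * v).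
have RB_left m' n' : P x * P (t m' n') = rhs x (t m' n').
  apply: (tensor_ext (f := fun u => P u * P (t m' n')) (g := rhs^~ (t m' n'))
      t_tensor) => [||m n]; last exact: RB_pure;
  apply: lin_DZ => *; rewrite /rhs;
  rewrite !(mulrDl, =^~ scalerAl, linD P_lin, linZ P_lin) ?scaler_in_alg; ring.
apply: (tensor_ext (f := fun v => P x * P v) (g := rhs x) t_tensor) => [||m n];
  last exact: RB_left;
apply: lin_DZ => *; rewrite /rhs;
rewrite !(mulrDr, =^~ scalerAr, linD P_lin, linZ P_lin) ?scaler_in_alg; ring.
Qed.

End RotaBaxter.

Section TensorWithCharacter.
Context {k : comNzRingType} {A1 A2 T : comAlgType k} {t : A1 -> A2 -> T}.
Hypothesis t_alg : is_tensor_alg t.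
Context {w : k} {Q1 : A1 -> A1} {Q2 : A2 -> A2} {chi : A2 -> k}.
Hypotheses (Q1_RB : ext_RB w 0 Q1) (Q2_RB : ext_RB w 0 Q2).
Hypothesis chiM : forall x y, chi (x * y) = chi x * chi y.
Hypothesis chiQ2 : forall x, chi (Q2 x) = 0.
Context {Qt : T -> T}.
Hypotheses (Qt_lin : lin Qt)
  (Qt_tensor : forall a b, Qt (t a b) = chi b *: t (Q1 a) 1 + t a (Q2 b)).

Lemma ext_RB_tensor_char : ext_RB w 0 Qt.
Proof.
move: t_alg Q1_RB Q2_RB => [t_tensor [_ tM]] [_ Q1RB] [_ Q2RB].
have t_bilin := t_tensor.1.
apply: (ext_RB_from_pure_tensors t_tensor Qt_lin) => a b c d.
rewrite !Qt_tensor !(mulrDl, mulrDr, =^~ scalerAl, =^~ scalerAr) !tM !(mulr1, mul1r).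
rewrite !(linD Qt_lin, linZ Qt_lin) !Qt_tensor !chiM !chiQ2 Q1RB Q2RB.
rewrite !(tensorDl t_bilin, tensorZl t_bilin, tensorDr t_bilin, tensorZr t_bilin).
rewrite !scaler_in_alg; ring.
Qed.

End TensorWithCharacter.

Theorem lemma4p3 (k : comNzRingType) (lam kap mu : k)
  (hmu : mu ^+ 2 - lam * mu + kap = 0)
  (A AA : comAlgType k) (tA : A -> A -> AA) (DeltaA : A -> AA) (epsA : A -> k^o)
  (hA : is_bialgebra tA DeltaA epsA)
  (Sh : comAlgType k) (jA : A -> Sh) (Pe : Sh -> Sh)
  (hSh : is_free_comm_ERB lam kap jA Pe)
  (eps_e : Sh -> k^o) (heps_hom : alg_hom eps_e)
  (heps_j : forall a, eps_e (jA a) = epsA a)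
  (heps_P : forall x, eps_e (Pe x) = - mu * eps_e x)
  (T : comAlgType k) (tT : Sh -> Sh -> T) (hT : is_tensor_alg tT)
  (Pbar : T -> T) (hPbar_lin : lin Pbar)
  (hPbar : forall a b : Sh,
     Pbar (tT a b) = tT (Pe a) (eps_e b *: 1) + mu *: tT a (eps_e b *: 1)
                     + tT a (Pe b)) :
  ext_RB lam kap Pbar.
Proof.
have [_ [Pe_RB _]] := hSh; have [eps_lin [_ epsM]] := heps_hom.
have t_bilin := hT.1.1.
have kapE : kap = lam * mu - mu ^+ 2 by rewrite -[LHS]subr0 -hmu; ring.
pose Q x := Pe x + mu *: x.
have Q_RB := ext_RB_shift (Q := Q) (fun _ => erefl) Pe_RB.
have kap_Q : kap - lam * mu + mu ^+ 2 = 0 by rewrite kapE; ring.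
rewrite kap_Q in Q_RB.
have eps_Q x : eps_e (Q x) = 0.
  by rewrite (linD eps_lin) (linZ eps_lin) heps_P mulNr addNr.
pose Qbar z := Pbar z + mu *: z.
have Qbar_lin : lin Qbar := lin_shift (fun _ => erefl) hPbar_lin.
have Qbar_tensor a b : Qbar (tT a b) = eps_e b *: tT (Q a) 1 + tT a (Q b).
  rewrite /Qbar hPbar !(tensorDl t_bilin, tensorZl t_bilin).
  by rewrite !(tensorDr t_bilin, tensorZr t_bilin) !scaler_in_alg; ring.
have Qbar_RB := ext_RB_tensor_char (chi := eps_e)
  hT Q_RB Q_RB epsM eps_Q Qbar_lin Qbar_tensor.
have Pbar_shift x : Pbar x = Qbar x + (- mu) *: x by rewrite /Qbar scaleNr addrK.
have lam_back : lam - mu *+ 2 - (- mu) *+ 2 = lam by ring.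
have kap_back : 0 - (lam - mu *+ 2) * (- mu) + (- mu) ^+ 2 = kap by rewrite kapE; ring.
by have := ext_RB_shift Pbar_shift Qbar_RB; rewrite lam_back kap_back.
Qed.
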